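(* In the pre-cylinder category $\mathcal C^\Delta_0$, for every $n\ge 1$ and $0\le k\le n$, the horn inclusion $\Lambda^n_k\hookrightarrow\Delta_n$ is a trivial cofibration (a monomorphism which belongs to the class of weak equivalences).
   Context: Let $\Delta$ denote the semi-simplicial category: objects the finite nonempty ordinals $[n]=\{0,\dots,n\}$, morphisms the injective order-preserving maps. A finite semi-simplicial set is a presheaf on $\Delta$ with finitely many simplices in total. $\mathcal C^\Delta_0$ is the category of finite semi-simplicial sets, with monomorphisms as cofibrations and with weak equivalences the smallest class $W$ of morphisms which contains all morphisms between representable presheaves $\Delta_m\to\Delta_n$ and makes $\mathcal C^\Delta_0$ a pre-cylinder category, i.e. $W$ contains isomorphisms, is closed under composition, satisfies 2-out-of-6 (if $f,g,h$ are composable with $f\circ g,g\circ h\in W$ then $f,g,h,f\circ g\circ h\in W$), and satisfies the cube lemma (given a natural transformation between spans $B\leftarrow A\to C$ and $B'\leftarrow A'\to C'$ with $A\to B$, $A'\to B'$ monomorphisms and the three components in $W$, the induced map $B\sqcup_AC\to B'\sqcup_{A'}C'$ is in $W$). Here $\Delta_n$ is the representable on $[n]$; $\Lambda^n_k\subset\Delta_n$ is the sub-presheaf of maps $f:[v]\to[n]$ whose image avoids at least one value different from $k$. *)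

From mathcomp Require Import all_boot.
Set Implicit Arguments. Unset Strict Implicit. Unset Printing Implicit Defensive.

(* A morphism [m] -> [n]: an injective order-preserving map, i.e. a strictly
   increasing map 'I_(m+1) -> 'I_(n+1). *)
Definition incrb m n (f : {ffun 'I_m.+1 -> 'I_n.+1}) : bool :=
  [forall i : 'I_m.+1, forall j : 'I_m.+1, (i < j)%N ==> (f i < f j)%N].

Definition DMap (m n : nat) := {f : {ffun 'I_m.+1 -> 'I_n.+1} | incrb f}.

Lemma did_incr n : incrb [ffun i : 'I_n.+1 => i].
Proof. by apply/forallP=> i; apply/forallP=> j; rewrite !ffunE; apply/implyP. Qed.

Definition did n : DMap n n := exist (@incrb n n) _ (did_incr n).

Lemma dcomp_incr m n p (g : DMap n p) (f : DMap m n) :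
  incrb [ffun i => sval g (sval f i)].
Proof.
case: g => g Hg; case: f => f Hf /=.
move/forallP: Hg => Hg; move/forallP: Hf => Hf.
apply/forallP=> i; apply/forallP=> j; rewrite !ffunE; apply/implyP=> lij.
have := forallP (Hf i) j; rewrite lij /= => lf.
by have := forallP (Hg (f i)) (f j); rewrite lf.
Qed.

Definition dcomp m n p (g : DMap n p) (f : DMap m n) : DMap m p :=
  exist (@incrb m p) _ (dcomp_incr g f).

Lemma dcomp_id_r m n (g : DMap m n) : dcomp g (did m) = g.
Proof. by apply: val_inj; apply/ffunP=> i; rewrite /= !ffunE. Qed.

Lemma dcomp_assoc m n p q (h : DMap p q) (g : DMap n p) (f : DMap m n) :
  dcomp h (dcomp g f) = dcomp (dcomp h g) f.
Proof. by apply: val_inj; apply/ffunP=> i; rewrite /= !ffunE. Qed.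

Lemma DMap_le m n (f : DMap m n) : (m <= n)%N.
Proof.
case: f => f /forallP Hf.
have inj : injective f.
  move=> i j eij; apply/eqP; case: (ltngtP i j) => [lij|lji|/val_inj -> //].
  - by have := forallP (Hf i) j; rewrite lij eij ltnn.
  - by have := forallP (Hf j) i; rewrite lji eij ltnn.
by have := leq_card f inj; rewrite !card_ord.
Qed.

(* Finiteness: finitely many simplices in total, i.e. each X_n finite and
   X_n empty for n large. *)
Record SSet := {
  simp :> nat -> finType;
  face : forall m n, DMap m n -> simp n -> simp m;
  face_id : forall n (x : simp n), face (did n) x = x;
  face_comp : forall m n p (f : DMap m n) (g : DMap n p) (x : simp p),
      face (dcomp g f) x = face f (face g x);
  ss_fin : exists N, forall n, (N <= n)%N -> simp n -> False
}.

Record Hom (X Y : SSet) := {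
  hmap :> forall n, X n -> Y n;
  hnat : forall m n (f : DMap m n) (x : X n),
      hmap (face f x) = face f (hmap x)
}.

Definition hid_ (X : SSet) : Hom X X := @Build_Hom X X (fun n x => x) (fun _ _ _ _ => erefl).

Lemma hcomp_nat (X Y Z : SSet) (g : Hom Y Z) (f : Hom X Y) m n (d : DMap m n) (x : X n) :
  g m (f m (face d x)) = face d (g n (f n x)).
Proof. by rewrite (hnat f) (hnat g). Qed.

Definition hcomp (X Y Z : SSet) (g : Hom Y Z) (f : Hom X Y) : Hom X Z :=
  @Build_Hom X Z (fun n x => g n (f n x)) (hcomp_nat g f).

Definition meq (X Y : SSet) (f g : Hom X Y) : Prop := forall n x, f n x = g n x.

Definition is_mono (X Y : SSet) (f : Hom X Y) : Prop :=
  forall (Z : SSet) (g h : Hom Z X), meq (hcomp f g) (hcomp f h) -> meq g h.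

Definition is_iso (X Y : SSet) (f : Hom X Y) : Prop :=
  exists g : Hom Y X, meq (hcomp g f) (hid_ X) /\ meq (hcomp f g) (hid_ Y).

Definition is_pushout (A B C P : SSet) (i : Hom A B) (j : Hom A C)
    (iB : Hom B P) (iC : Hom C P) : Prop :=
  meq (hcomp iB i) (hcomp iC j) /\
  forall (Z : SSet) (u : Hom B Z) (v : Hom C Z),
    meq (hcomp u i) (hcomp v j) ->
    exists w : Hom P Z,
      [/\ meq (hcomp w iB) u, meq (hcomp w iC) v &
          forall w' : Hom P Z, meq (hcomp w' iB) u -> meq (hcomp w' iC) v -> meq w' w].

Lemma rep_id n m (g : DMap m n) : dcomp g (did m) = g.
Proof. exact: dcomp_id_r. Qed.

Lemma rep_comp n m p q (f : DMap m p) (g : DMap p q) (x : DMap q n) :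
  dcomp x (dcomp g f) = dcomp (dcomp x g) f.
Proof. exact: dcomp_assoc. Qed.

Lemma rep_fin n : exists N, forall m, (N <= m)%N -> DMap m n -> False.
Proof.
exists n.+1 => m lm f; have := DMap_le f.
by move=> lmn; have := leq_trans lm lmn; rewrite ltnn.
Qed.

Definition Rep (n : nat) : SSet :=
  @Build_SSet (fun m => DMap m n) (fun m p f x => dcomp x f)
              (@rep_id n) (@rep_comp n) (rep_fin n).

Definition hornb n (k : 'I_n.+1) v (f : DMap v n) : bool :=
  [exists j : 'I_n.+1, (j != k) && [forall i : 'I_v.+1, sval f i != j]].

Lemma horn_face n (k : 'I_n.+1) m p (d : DMap m p) (x : {f : DMap p n | hornb k f}) :
  hornb k (dcomp (sval x) d).
Proof.
case: x => x Hx /=; case/existsP: Hx => j /andP [jk /forallP Hj].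
apply/existsP; exists j; rewrite jk /=; apply/forallP=> i.
by rewrite ffunE; apply: Hj.
Qed.

Definition horn_facef n (k : 'I_n.+1) m p (d : DMap m p)
  (x : {f : DMap p n | hornb k f}) : {f : DMap m n | hornb k f} :=
  exist (@hornb n k m) _ (horn_face d x).

Lemma horn_id n (k : 'I_n.+1) m (x : {f : DMap m n | hornb k f}) :
  horn_facef (did m) x = x.
Proof. by apply: val_inj; rewrite /= dcomp_id_r. Qed.

Lemma horn_comp n (k : 'I_n.+1) m p q (f : DMap m p) (g : DMap p q)
   (x : {f : DMap q n | hornb k f}) :
  horn_facef (dcomp g f) x = horn_facef f (horn_facef g x).
Proof. by apply: val_inj; rewrite /= dcomp_assoc. Qed.

Lemma horn_fin n (k : 'I_n.+1) :
  exists N, forall m, (N <= m)%N -> {f : DMap m n | hornb k f} -> False.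
Proof.
case: (rep_fin n) => N HN; exists N => m lm x; exact: (HN m lm (sval x)).
Qed.

(* Lambda^n_k : the sub-presheaf of Delta_n of maps f : [v] -> [n] whose
   image avoids at least one value different from k. *)
Definition Horn (n : nat) (k : 'I_n.+1) : SSet :=
  @Build_SSet (fun m => {f : DMap m n | hornb k f}) (@horn_facef n k)
              (@horn_id n k) (@horn_comp n k) (horn_fin k).

Definition horn_incl (n : nat) (k : 'I_n.+1) : Hom (Horn k) (Rep n) :=
  @Build_Hom (Horn k) (Rep n) (fun m x => sval x) (fun _ _ _ _ => erefl).

Definition MorClass := forall X Y : SSet, Hom X Y -> Prop.

(* The axioms of a pre-cylinder category for the class W
   (cofibrations = monomorphisms). *)
Definition precylinder_class (W : MorClass) : Prop :=
  (forall (X Y : SSet) (f : Hom X Y), is_iso f -> W X Y f) /\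
  (forall (X Y Z : SSet) (g : Hom Y Z) (f : Hom X Y),
      W X Y f -> W Y Z g -> W X Z (hcomp g f)) /\
  (forall (X Y Z V : SSet) (h : Hom X Y) (g : Hom Y Z) (f : Hom Z V),
      W Y V (hcomp f g) -> W X Z (hcomp g h) ->
      [/\ W Z V f, W Y Z g, W X Y h & W X V (hcomp f (hcomp g h))]) /\
  (forall (A B C A' B' C' : SSet) (i : Hom A B) (j : Hom A C)
          (i' : Hom A' B') (j' : Hom A' C')
          (a : Hom A A') (b : Hom B B') (c : Hom C C'),
      is_mono i -> is_mono i' ->
      meq (hcomp b i) (hcomp i' a) -> meq (hcomp c j) (hcomp j' a) ->
      W A A' a -> W B B' b -> W C C' c ->
      forall (P : SSet) (iB : Hom B P) (iC : Hom C P),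
      is_pushout i j iB iC ->
      forall (P' : SSet) (iB' : Hom B' P') (iC' : Hom C' P'),
      is_pushout i' j' iB' iC' ->
      forall u : Hom P P',
      meq (hcomp u iB) (hcomp iB' b) -> meq (hcomp u iC) (hcomp iC' c) ->
      W P P' u).

(* W : the smallest class containing all morphisms between representables
   and satisfying the pre-cylinder axioms (intersection of all such classes). *)
Definition weq (X Y : SSet) (f : Hom X Y) : Prop :=
  forall W : MorClass,
    (forall (m n : nat) (g : Hom (Rep m) (Rep n)), W (Rep m) (Rep n) g) ->
    precylinder_class W -> W X Y f.

Definition trivial_cofibration (X Y : SSet) (f : Hom X Y) : Prop :=
  is_mono f /\ weq f.

From mathcomp Require Import all_boot.
From Stdlib Require Import FunctionalExtensionality ProofIrrelevance.
Set Implicit Arguments. Unset Strict Implicit. Unset Printing Implicit Defensive.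

(* For a nonempty proper J ⊆ [n] let U_J ⊆ Δ_n be the union of the faces
   opposite to the vertices j ∈ J, so that Λ^n_k = U_{[n] \ k}.  Every
   inclusion U_J → Δ_n is a weak equivalence, by induction on n and #|J|.
   A single face U_{j} is isomorphic to Δ_{n-1} through the coface δ_j, so
   2-out-of-6 applied to U_{j} ≅ Δ_{n-1} → U_{j} → Δ_n settles #|J| = 1.
   Adding a vertex j ∉ J gives a pushout U_{j ∪ J} = U_J ⊔ Δ_{n-1} over
   U_{J'} ⊆ Δ_{n-1}, where J' = δ_j^{-1}(J); comparing it with the trivial
   pushout Δ_n = Δ_n ⊔ Δ_{n-1} over Δ_{n-1}, the cube lemma concludes. *)

Lemma meq_eq (X Y : SSet) (f g : Hom X Y) : meq f g -> f = g.
Proof.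
case: f => f Hf; case: g => g Hg /= E.
have fg : f = g.
  by apply: functional_extensionality_dep => n; apply: functional_extensionality.
by subst g; f_equal; apply: proof_irrelevance.
Qed.

Lemma is_iso_id (X : SSet) (f : Hom X X) : meq f (hid_ X) -> is_iso f.
Proof. by move=> E; exists (hid_ X); split=> m x /=; rewrite E. Qed.

Lemma ltn_bump2 h i j : (bump h i < bump h j) = (i < j).
Proof. by rewrite !ltnNge leq_bump2. Qed.

Definition avoids m n (j : 'I_n.+1) (x : DMap m n) : bool := [forall i, sval x i != j].

Lemma avoids_comp n (j : 'I_n.+1) m p (d : DMap m p) (x : DMap p n) :
  avoids j x -> avoids j (dcomp x d).
Proof. by move/forallP=> H; apply/forallP=> i; rewrite /= ffunE. Qed.

Section Coface.
Variables (n : nat) (j : 'I_n.+2).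

Lemma coface_incr : incrb [ffun i : 'I_n.+1 => lift j i].
Proof.
by apply/forallP=> i; apply/forallP=> i'; rewrite !ffunE /= ltn_bump2; apply/implyP.
Qed.

Definition coface : DMap n n.+1 := exist (@incrb _ _) _ coface_incr.

Lemma coface_inj m : injective (@dcomp m n n.+1 coface).
Proof.
move=> y z E; apply: val_inj; apply/ffunP=> i; apply: (@lift_inj _ j).
by have := congr1 (fun f : DMap m n.+1 => sval f i) E; rewrite /= !ffunE.
Qed.

Lemma avoids_coface m (y : DMap m n) : avoids j (dcomp coface y).
Proof. by apply/forallP=> i; rewrite /= !ffunE eq_sym neq_lift. Qed.

Section Factor.
Variables (m : nat) (x : DMap m n.+1).
Hypothesis x_avoids : avoids j x.

(* [ord0] is a junk value, never reached since [x] avoids [j]. *)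
Definition unlift_fun : {ffun 'I_m.+1 -> 'I_n.+1} :=
  [ffun i => odflt ord0 (unlift j (sval x i))].

Lemma lift_unlift_fun i : lift j (unlift_fun i) = sval x i.
Proof.
have := forallP x_avoids i; rewrite eq_sym ffunE.
by case/unlift_some=> k -> ->.
Qed.

Lemma unlift_fun_incr : incrb unlift_fun.
Proof.
apply/forallP=> i; apply/forallP=> i'; apply/implyP=> lt_ii'.
rewrite -(ltn_bump2 j) -[bump _ _]/(val (lift j _)) -[bump j _]/(val (lift j _)).
rewrite !lift_unlift_fun.
by case: x => f /= /forallP/(_ i)/forallP/(_ i'); rewrite lt_ii'.
Qed.

Definition coface_factor : DMap m n := exist (@incrb _ _) _ unlift_fun_incr.

Lemma coface_factorK : dcomp coface coface_factor = x.
Proof.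
apply: val_inj; apply/ffunP=> i; rewrite /= !ffunE.
by have := lift_unlift_fun i; rewrite ffunE.
Qed.

End Factor.

Lemma coface_factor_coface m (y : DMap m n) (H : avoids j (dcomp coface y)) :
  coface_factor H = y.
Proof. by apply: coface_inj; rewrite coface_factorK. Qed.

Lemma coface_factor_comp m p (d : DMap m p) (x : DMap p n.+1) (H : avoids j x)
    (Hd : avoids j (dcomp x d)) :
  coface_factor Hd = dcomp (coface_factor H) d.
Proof. by apply: coface_inj; rewrite dcomp_assoc !coface_factorK. Qed.

End Coface.

Section Faces.
Variable n : nat.

Definition in_faces (J : {set 'I_n.+1}) m (x : DMap m n) : bool :=
  [exists j in J, avoids j x].

Lemma in_faces_comp (J : {set 'I_n.+1}) m p (d : DMap m p) (x : DMap p n) :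
  in_faces J x -> in_faces J (dcomp x d).
Proof.
by case/existsP=> j /andP[jJ xj]; apply/existsP; exists j; rewrite jJ avoids_comp.
Qed.

Lemma in_facesS (J1 J2 : {set 'I_n.+1}) m (x : DMap m n) :
  J1 \subset J2 -> in_faces J1 x -> in_faces J2 x.
Proof.
move=> /subsetP sJ /existsP[j /andP[jJ xj]].
by apply/existsP; exists j; rewrite xj sJ.
Qed.

Variable J : {set 'I_n.+1}.

Definition faces_face m p (d : DMap m p) (x : {f : DMap p n | in_faces J f}) :
  {f : DMap m n | in_faces J f} := exist (@in_faces J m) _ (in_faces_comp d (valP x)).

Lemma faces_face_id m (x : {f : DMap m n | in_faces J f}) : faces_face (did m) x = x.
Proof. by apply: val_inj; rewrite /= dcomp_id_r. Qed.

Lemma faces_face_comp m p q (f : DMap m p) (g : DMap p q)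
    (x : {f : DMap q n | in_faces J f}) :
  faces_face (dcomp g f) x = faces_face f (faces_face g x).
Proof. by apply: val_inj; rewrite /= dcomp_assoc. Qed.

Lemma faces_fin :
  exists N, forall m, (N <= m)%N -> {f : DMap m n | in_faces J f} -> False.
Proof. by case: (rep_fin n) => N HN; exists N => m lm x; apply: (HN m lm (sval x)). Qed.

Definition Faces : SSet :=
  @Build_SSet (fun m => {f : DMap m n | in_faces J f}) faces_face
              faces_face_id faces_face_comp faces_fin.

Definition faces_incl : Hom Faces (Rep n) :=
  @Build_Hom Faces (Rep n) (fun m x => sval x) (fun _ _ _ _ => erefl).

End Faces.

Section Corestriction.
Variables (X : SSet) (n : nat) (J : {set 'I_n.+1}) (f : Hom X (Rep n)).
Hypothesis f_in_faces : forall m (x : X m), in_faces J (f m x).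

Definition faces_corestr_fun m (x : X m) : Faces J m :=
  exist (@in_faces n J m) (f m x) (f_in_faces x).

Lemma faces_corestr_nat m p (d : DMap m p) (x : X p) :
  faces_corestr_fun (face d x) = face d (faces_corestr_fun x).
Proof. by apply: val_inj; rewrite /= (hnat f d x). Qed.

Definition faces_corestr : Hom X (Faces J) := Build_Hom faces_corestr_nat.

End Corestriction.

Definition faces_widen n (J1 J2 : {set 'I_n.+1}) (sJ : J1 \subset J2) :
    Hom (Faces J1) (Faces J2) :=
  faces_corestr (fun m x => in_facesS sJ (valP x) : in_faces J2 (faces_incl J1 m x)).

Section CofaceMorphisms.
Variables (n : nat) (j : 'I_n.+2).

Definition cofaceR : Hom (Rep n) (Rep n.+1) :=
  @Build_Hom (Rep n) (Rep n.+1) (fun m y => dcomp (coface j) y)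
    (fun _ _ _ _ => dcomp_assoc _ _ _).

Lemma mono_cofaceR : is_mono cofaceR.
Proof. by move=> Z g h E m x; apply: (@coface_inj _ j); apply: E. Qed.

Lemma in_faces_coface (J : {set 'I_n.+2}) m (y : DMap m n) :
  j \in J -> in_faces J (cofaceR m y).
Proof. by move=> jJ; apply/existsP; exists j; rewrite jJ avoids_coface. Qed.

Definition coface_to_faces (J : {set 'I_n.+2}) (jJ : j \in J) : Hom (Rep n) (Faces J) :=
  @faces_corestr (Rep n) _ J cofaceR (fun m y => in_faces_coface y jJ).

Definition preim_lift (J : {set 'I_n.+2}) : {set 'I_n.+1} := [set i | lift j i \in J].

Lemma in_faces_preim_lift (J : {set 'I_n.+2}) m (y : Faces (preim_lift J) m) :
  in_faces J (hcomp cofaceR (faces_incl (preim_lift J)) m y).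
Proof.
have /existsP[i /andP[iJ /forallP yi]] := valP y; apply/existsP; exists (lift j i).
rewrite inE in iJ; rewrite iJ; apply/forallP=> t; rewrite /= !ffunE.
by apply: contra (yi t) => /eqP/lift_inj ->.
Qed.

Definition coface_faces (J : {set 'I_n.+2}) : Hom (Faces (preim_lift J)) (Faces J) :=
  faces_corestr (@in_faces_preim_lift J).

Lemma mono_coface_faces (J : {set 'I_n.+2}) : is_mono (coface_faces J).
Proof.
move=> Z g h E m x; apply: val_inj; apply: (@coface_inj _ j).
exact: (congr1 sval (E m x)).
Qed.

Lemma avoids_in_faces1 m (x : DMap m n.+1) : in_faces [set j] x -> avoids j x.
Proof. by case/existsP=> i /andP[/set1P ->]. Qed.

Definition faces1_factor : Hom (Faces [set j]) (Rep n) :=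
  @Build_Hom (Faces [set j]) (Rep n)
    (fun m x => coface_factor (avoids_in_faces1 (valP x)))
    (fun _ _ _ _ => coface_factor_comp _ _).

Lemma coface_faces1_factor :
  meq (hcomp (coface_to_faces (set11 j)) faces1_factor) (hid_ (Faces [set j])).
Proof. by move=> m x; apply: val_inj; apply: coface_factorK. Qed.

End CofaceMorphisms.

Section Pushout.
Variables (n : nat) (j : 'I_n.+2) (J : {set 'I_n.+2}).
Hypothesis jNJ : j \notin J.

Lemma avoids_of_in_facesU1 m (x : DMap m n.+1) :
  in_faces (j |: J) x -> ~~ in_faces J x -> avoids j x.
Proof.
case/existsP=> i /andP[]; rewrite !inE => /orP[/eqP -> // | iJ] xi.
by case/negP; apply/existsP; exists i; rewrite iJ.
Qed.

Lemma in_faces_coface_factor m (x : DMap m n.+1) (H : avoids j x) :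
  in_faces J x -> in_faces (preim_lift j J) (coface_factor H).
Proof.
case/existsP=> i /andP[iJ /forallP xi].
have /unlift_some[i' Ei _] : j != i by apply: contraNneq jNJ => ->.
apply/existsP; exists i'; rewrite inE -Ei iJ /=; apply/forallP=> t.
by apply: contra (xi t) => /eqP E; rewrite Ei -E (lift_unlift_fun H).
Qed.

Section Glue.
Variables (Z : SSet) (u : Hom (Faces J) Z) (v : Hom (Rep n) Z).
Hypothesis uv : meq (hcomp u (coface_faces j J)) (hcomp v (faces_incl (preim_lift j J))).

Lemma glue_compat m (x : DMap m n.+1) (H : avoids j x) (HJ : in_faces J x) :
  u m (exist (@in_faces _ J m) x HJ) = v m (coface_factor H).
Proof.
rewrite -[RHS](uv (exist (@in_faces _ _ m) _ (in_faces_coface_factor H HJ))) /=.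
by congr (u m _); apply: val_inj; rewrite /= coface_factorK.
Qed.

Definition glue_fun m (x : Faces (j |: J) m) : Z m :=
  match boolP (in_faces J (sval x)) with
  | AltTrue HJ => u m (exist (@in_faces _ J m) (sval x) HJ)
  | AltFalse HJ => v m (coface_factor (avoids_of_in_facesU1 (valP x) HJ))
  end.

Lemma glue_fun_in m (x : Faces (j |: J) m) (HJ : in_faces J (sval x)) :
  glue_fun x = u m (exist (@in_faces _ J m) (sval x) HJ).
Proof.
rewrite /glue_fun; destruct (boolP (in_faces J (sval x))) as [HJ' | HJ'].
  by congr (u m _); apply: val_inj.
by case/negP: HJ'.
Qed.

Lemma glue_fun_avoids m (x : Faces (j |: J) m) (H : avoids j (sval x)) :
  glue_fun x = v m (coface_factor H).
Proof.
have factorE (H' : avoids j (sval x)) : coface_factor H' = coface_factor H.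
  by apply: (@coface_inj _ j); rewrite !coface_factorK.
rewrite /glue_fun; destruct (boolP (in_faces J (sval x))) as [HJ | HJ].
  by rewrite (glue_compat H).
by rewrite factorE.
Qed.

Lemma glue_nat m p (d : DMap m p) (x : Faces (j |: J) p) :
  glue_fun (face d x) = face d (glue_fun x).
Proof.
have [HJ | HJ] := boolP (in_faces J (sval x)).
  rewrite (glue_fun_in HJ) (glue_fun_in (x := face d x) (in_faces_comp d HJ)) -hnat.
  by congr (u m _); apply: val_inj.
have H := avoids_of_in_facesU1 (valP x) HJ.
rewrite (glue_fun_avoids H) (glue_fun_avoids (x := face d x) (avoids_comp d H)) -hnat.
by congr (v m _); apply: coface_factor_comp.
Qed.

Definition glue : Hom (Faces (j |: J)) Z := Build_Hom glue_nat.

End Glue.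

Lemma faces_pushout :
  is_pushout (coface_faces j J) (faces_incl (preim_lift j J))
    (faces_widen (subsetUr [set j] J)) (coface_to_faces (setU11 j J)).
Proof.
split=> [m y | Z u v uv]; first exact: val_inj.
exists (glue uv); split.
- move=> m x /=; rewrite (glue_fun_in u v (x := faces_widen _ m x) (valP x)).
  by congr (u m _); apply: val_inj.
- move=> m y /=.
  rewrite (glue_fun_avoids uv (x := coface_to_faces _ m y) (avoids_coface j y)).
  by rewrite coface_factor_coface.
- move=> w wu wv m x /=.
  have [HJ | HJ] := boolP (in_faces J (sval x)).
    rewrite (glue_fun_in u v HJ) -(wu m (exist (@in_faces _ J m) _ HJ)).
    by congr (w m _); apply: val_inj.
  have H := avoids_of_in_facesU1 (valP x) HJ.
  rewrite (glue_fun_avoids uv H) -(wv m).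
  by congr (w m _); apply: val_inj; rewrite /= coface_factorK.
Qed.

End Pushout.

Lemma preim_lift_neq0 n (j : 'I_n.+2) (J : {set 'I_n.+2}) :
  J != set0 -> j \notin J -> preim_lift j J != set0.
Proof.
case/set0Pn=> i iJ jNJ.
have /unlift_some[i' Ei _] : j != i by apply: contraNneq jNJ => ->.
by apply/set0Pn; exists i'; rewrite inE -Ei.
Qed.

Lemma preim_lift_proper n (j : 'I_n.+2) (J : {set 'I_n.+2}) :
  j |: J != setT -> preim_lift j J != setT.
Proof.
apply: contra_neq => preT; apply/setP=> t; rewrite !inE.
case: (unliftP j t) => [t' -> | ->]; last by rewrite eqxx.
by have := in_setT t'; rewrite -preT inE => ->; rewrite orbT.
Qed.

Lemma W_meq (W : MorClass) (X Y : SSet) (f g : Hom X Y) : W X Y f -> meq f g -> W X Y g.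
Proof. by move=> Wf /meq_eq <-. Qed.

Lemma pushout_id_r (A B : SSet) (f : Hom A B) : is_pushout f (hid_ A) (hid_ B) f.
Proof. by split=> // Z u v uv; exists u; split. Qed.

Section WeakEquivalences.
Variable W : MorClass.
Hypothesis W_rep : forall m n (g : Hom (Rep m) (Rep n)), W g.
Hypothesis W_precyl : precylinder_class W.

Lemma W_faces1 n (j : 'I_n.+2) : W (faces_incl [set j]).
Proof.
case: W_precyl => W_iso [_ [W_2of6 _]].
have [||] := W_2of6 _ _ _ _ (faces1_factor j) (coface_to_faces (set11 j)) (faces_incl [set j]).
- exact: W_rep.
- exact/W_iso/is_iso_id/coface_faces1_factor.
- by [].
Qed.

Lemma W_facesU1 n (j : 'I_n.+2) (J : {set 'I_n.+2}) : j \notin J ->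
  W (faces_incl (preim_lift j J)) -> W (faces_incl J) ->
  W (faces_incl (j |: J)).
Proof.
move=> jNJ W_pre W_J; case: W_precyl => _ [_ [_ W_cube]].
apply: (W_cube _ _ _ _ _ _ _ _ _ _ _ _ (hid_ (Rep n)) _ _ _ _ W_pre W_J _
          _ _ _ (faces_pushout jNJ) _ _ _ (pushout_id_r (cofaceR j))) => //.
- exact: mono_coface_faces.
- exact: mono_cofaceR.
Qed.

Lemma W_faces n (J : {set 'I_n.+1}) : J != set0 -> J != setT -> W (faces_incl J).
Proof.
elim: n J => [|n IHn] J.
  case/set0Pn=> i iJ; case/negP; apply/eqP/setP=> t.
  by rewrite inE (ord1 t) -(ord1 i) iJ.
have [c] := ubnP #|J|; elim: c J => // c IHc J; rewrite ltnS => JleC J0 JT.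
have [j jJ] := set0Pn _ J0.
have [J'0 | J'0] := eqVneq (J :\ j) set0.
  by rewrite -(setD1K jJ) J'0 setU0; apply: W_faces1.
rewrite -(setD1K jJ) in JT *; apply: W_facesU1; first by rewrite setD11.
- by apply: IHn; [apply: preim_lift_neq0 J'0 _; rewrite setD11 | apply: preim_lift_proper].
- apply: IHc => //; first by rewrite (cardsD1 j J) jJ add1n in JleC.
  by apply/negP=> /eqP E; have := setD11 j J; rewrite E inE.
Qed.

End WeakEquivalences.

Section HornAsFaces.
Variables (n : nat) (k : 'I_n.+1).

Lemma hornb_in_faces m (x : DMap m n) : hornb k x = in_faces [set~ k] x.
Proof. by apply: eq_existsb => t; rewrite in_setC1. Qed.

Definition horn_to_faces : Hom (Horn k) (Faces [set~ k]) :=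
  @faces_corestr (Horn k) _ _ (horn_incl k)
    (fun m x => etrans (esym (hornb_in_faces (sval x))) (valP x)).

Lemma horn_inclE : meq (hcomp (faces_incl [set~ k]) horn_to_faces) (horn_incl k).
Proof. by []. Qed.

Definition faces_to_horn_fun m (x : Faces [set~ k] m) : Horn k m :=
  exist (@hornb n k m) (sval x) (etrans (hornb_in_faces (sval x)) (valP x)).

Lemma faces_to_horn_nat m p (d : DMap m p) (x : Faces [set~ k] p) :
  faces_to_horn_fun (face d x) = face d (faces_to_horn_fun x).
Proof. exact: val_inj. Qed.

Lemma horn_to_faces_iso : is_iso horn_to_faces.
Proof. by exists (Build_Hom faces_to_horn_nat); split=> m x; apply: val_inj. Qed.

End HornAsFaces.

Theorem mainTheorem17 :
  forall (n : nat) (k : 'I_n.+1), (1 <= n)%N -> trivial_cofibration (@horn_incl n k).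
Proof.
move=> n k n_gt0; split=> [Z g h E m x | W W_rep W_precyl].
  by apply: val_inj; apply: E.
have [W_iso [W_comp _]] := W_precyl.
apply: W_meq (horn_inclE (k := k)); apply: W_comp.
  exact/W_iso/horn_to_faces_iso.
apply: (W_faces W_rep W_precyl).
  by rewrite -card_gt0 cardsC1 card_ord.
by apply/negP=> /eqP E; have := in_setT k; rewrite -E !inE eqxx.
Qed.
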